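(* Let $f_0\in\mathbb{C}[z]$ be a polynomial of length $\ell$ with nonzero constant coefficient, let $t$ be an element of the group $G_\ell=\langle n,h,r\rangle$ of permutations of $P_\ell$, and let $a_0=t(f_0)$. Let $f_0,f_1,\ldots$ and $a_0,a_1,\ldots$ be sequences of Rudin–Shapiro-like polynomials generated from $f_0$ and $a_0$, i.e., $f_{m+1}(z)=f_m(z)+\sigma_m z^{\operatorname{len} f_m}f_m^\dagger(-z)$ and $a_{m+1}(z)=a_m(z)+\sigma'_m z^{\operatorname{len} a_m}a_m^\dagger(-z)$ for some sign sequences $(\sigma_m),(\sigma'_m)$ in $\{-1,1\}$. Then $\lim_{m\to\infty}\mathrm{ADF}(a_m)=\lim_{m\to\infty}\mathrm{ADF}(f_m)$.
   Context: For a polynomial $a(z)=a_0+\cdots+a_dz^d$ of degree $d$, $\operatorname{len}a=1+d$ and $a^\dagger(z)=\overline{a_d}+\overline{a_{d-1}}z+\cdots+\overline{a_0}z^d$; $a^\dagger(-z)$ means $a^\dagger$ evaluated at $-z$; $\widetilde{a}(z)=a(-z)$. $P_\ell$ is the set of polynomials of length $\ell$ in $\mathbb{C}[z]$ with nonzero constant coefficient, and $G_\ell$ is the group of permutations of $P_\ell$ generated by $n(f)=-f$, $h(f)=\widetilde{f}$, $r(f)=f^\dagger$. Polynomials are identified with their coefficient sequences; for a sequence $f$, with $C_{f,f}(s)=\sum_jf_{j+s}\overline{f_j}$, the autocorrelation demerit factor is $\mathrm{ADF}(f)=\sum_{s\ne0}|C_{f,f}(s)|^2/|C_{f,f}(0)|^2$,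 which equals $\|f\|_4^4/\|f\|_2^4-1$ with $\|f\|_p=\left(\frac{1}{2\pi}\int_0^{2\pi}|f(e^{i\theta})|^pd\theta\right)^{1/p}$. *)

From HB Require Import structures.
From mathcomp Require Import all_boot all_order all_algebra.
From mathcomp Require Import complex.
From mathcomp Require Import all_classical all_reals all_analysis.

Set Implicit Arguments.
Unset Strict Implicit.
Unset Printing Implicit Defensive.

Import Order.TTheory GRing.Theory Num.Theory.
Local Open Scope ring_scope.
Local Open Scope complex_scope.

Section RSDefs.
Variable R : realType.
Local Notation C := R[i].

Definition len (a : {poly C}) : nat := size a.

Definition in_P (ell : nat) (a : {poly C}) : Prop := len a = ell /\ a`_0 != 0.

Definition dagger (a : {poly C}) : {poly C} :=
  \poly_(i < size a) (a`_(size a - 1 - i))^*.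

Definition tilde (a : {poly C}) : {poly C} := a \Po (- 'X).

Definition gen_n (f : {poly C}) : {poly C} := - f.
Definition gen_h (f : {poly C}) : {poly C} := tilde f.
Definition gen_r (f : {poly C}) : {poly C} := dagger f.

(* the group G_ell = <n, h, r>: since n, h, r are involutions, the group they
   generate consists of the finite words (compositions) in n, h, r. *)
Inductive in_G : ({poly C} -> {poly C}) -> Prop :=
  | in_G_id : in_G id
  | in_G_n t : in_G t -> in_G (gen_n \o t)
  | in_G_h t : in_G t -> in_G (gen_h \o t)
  | in_G_r t : in_G t -> in_G (gen_r \o t).

Definition rs_step (sigma : C) (f : {poly C}) : {poly C} :=
  f + sigma *: ('X^(len f) * tilde (dagger f)).

Definition RS_like (f : nat -> {poly C}) : Prop :=
  exists sigma : nat -> C,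
    (forall m, sigma m = 1 \/ sigma m = -1) /\
    (forall m, f m.+1 = rs_step (sigma m) (f m)).

Definition coefz (f : {poly C}) (k : int) : C :=
  match k with Posz n => f`_n | Negz _ => 0 end.

Definition acorr (f : {poly C}) (s : int) : C :=
  \sum_(j < size f) coefz f (j%:Z + s) * (f`_j)^*.

Definition sqnorm (z : C) : R := ComplexField.Normc.normc z ^+ 2.

(* ADF(f) = sum_{s <> 0} |C_{f,f}(s)|^2 / |C_{f,f}(0)|^2; C_{f,f}(s) = 0
   unless |s| < size f, so the sum ranges over s = k - (size f - 1),
   k < 2 size f - 1, s <> 0. *)
Definition ADF (f : {poly C}) : R :=
  (\sum_(k < (size f).*2.-1 | (k%:Z - (size f).-1%:Z) != 0)
      sqnorm (acorr f (k%:Z - (size f).-1%:Z))) / sqnorm (acorr f 0).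

End RSDefs.

From HB Require Import structures.
From mathcomp Require Import all_boot all_order all_algebra.
From mathcomp Require Import complex.
From mathcomp Require Import all_classical all_reals all_analysis.
From mathcomp Require Import ring lra zify.
Import Order.TTheory GRing.Theory Num.Theory.
Import numFieldNormedType.Exports.

(* Write N f = ||f||^2, A f = ||f f^dagger||^2 and B f = ||f tilde(f)||^2 for
   the l^2 norm of coefficient sequences.  The coefficients of f f^dagger are
   the autocorrelations of f, so ADF f = A f / (N f)^2 - 1.  For one
   Rudin-Shapiro-like step f' = f + sigma z^(len f) f^dagger(-z), the product
   f' f'^dagger splits into a part that is odd and a part that is even under
   z |-> -z; these are orthogonal, and computing their norms gives
   N' = 2 N, A' = 2 A + 4 B, B' = 2 A.  Hence (A + B) / N^2 is constant along
   the sequence while (A - 2 B) / N^2 is multiplied by -1/2 at each step, so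
   A / N^2 tends to 2/3 of the initial value of (A + B) / N^2.  Negation,
   z |-> -z and conjugate reversal all preserve N, A and B, so this limit is
   the same for f_0 and t(f_0). *)

Set Implicit Arguments.
Unset Strict Implicit.
Unset Printing Implicit Defensive.

Local Open Scope complex_scope.
Local Open Scope ring_scope.

Lemma signr_mul_same (T : pzRingType) n : (-1) ^+ n * (-1) ^+ n = 1 :> T.
Proof. by rewrite -exprD addnn -mul2n exprM sqrrN !expr1n. Qed.

Lemma eq_poly_horner_nz (F : numDomainType) (p q : {poly F}) :
  (forall x, x != 0 -> p.[x] = q.[x]) -> p = q.
Proof.
move=> eq_pq; apply/eqP; rewrite -subr_eq0; apply/eqP.
pose xs := [seq i.+1%:R : F | i <- iota 0 (size (p - q))].
apply: (@roots_geq_poly_eq0 _ _ xs).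
- by apply/allP => _ /mapP[i _ ->]; rewrite /root !hornerE eq_pq ?subrr ?pnatr_eq0.
- by rewrite map_inj_uniq ?iota_uniq // => i j /eqP; rewrite eqr_nat eqSS => /eqP.
- by rewrite size_map size_iota.
Qed.

Lemma lt_size_coef (T : nzSemiRingType) (p : {poly T}) i :
  p`_i != 0 -> (i < size p)%N.
Proof. by apply: contraR; rewrite -leqNgt => /leq_sizeP ->. Qed.

Lemma sum_ord_widen (V : nmodType) m n (F : nat -> V) :
  (m <= n)%N -> (forall i, (m <= i)%N -> F i = 0) ->
  \sum_(i < n) F i = \sum_(i < m) F i.
Proof.
move=> le_mn F0; rewrite (big_ord_widen n F le_mn) [RHS]big_mkcond /=.
by apply: eq_bigr => i _; case: ltnP => // /F0.
Qed.

Lemma size_mul_leqS (T : nzSemiRingType) m n (p q : {poly T}) :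
  (size p <= m.+1)%N -> (size q <= n.+1)%N ->
  (size (p * q)%R <= (m + n).+1)%N.
Proof. by move=> sp sq; apply: leq_trans (size_polyMleq p q) _; lia. Qed.

Lemma size_mulXn_leq (T : nzSemiRingType) k (p : {poly T}) :
  (size ('X^k * p)%R <= k + size p)%N.
Proof.
apply/leq_sizeP => j le_j; rewrite coefXnM; case: ltnP => // le_kj.
by apply: nth_default; rewrite leq_subRL.
Qed.

Section RudinShapiro.
Variable R : realType.
Local Notation C := R[i].
Implicit Types (p q g : {poly C}) (z : C).

Lemma sqnormE z : (sqnorm z)%:C = z * z^*.
Proof.
case: z => a b; rewrite /sqnorm /= sqr_sqrtr ?addr_ge0 ?sqr_ge0 //.
by rewrite -normCK -(add_Re2_Im2 (a +i* b)).
Qed.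

Lemma sqnorm_ge0 z : 0 <= sqnorm z.
Proof. exact: sqr_ge0. Qed.

Lemma sqnorm_real (x : R) : sqnorm x%:C = x ^+ 2.
Proof. by rewrite /sqnorm /= expr0n addr0 sqrtr_sqr real_normK ?num_real. Qed.

Lemma sqnorm0 : sqnorm (0 : C) = 0.
Proof. by apply: complexI; rewrite sqnormE mul0r. Qed.

Lemma sqnorm_gt0 z : z != 0 -> 0 < sqnorm z.
Proof.
move=> nz_z; rewrite lt_def sqnorm_ge0 andbT; apply: contra nz_z => /eqP z0.
by have /eqP := sqnormE z; rewrite z0 eq_sym mulf_eq0 conjC_eq0 orbb.
Qed.

Lemma tildeD p q : tilde (p + q) = tilde p + tilde q.
Proof. exact: rmorphD. Qed.

Lemma tildeN p : tilde (- p) = - tilde p.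
Proof. exact: rmorphN. Qed.

Lemma tildeZ c p : tilde (c *: p) = c *: tilde p.
Proof. exact: linearZ. Qed.

Lemma tildeM p q : tilde (p * q) = tilde p * tilde q.
Proof. exact: rmorphM. Qed.

Lemma tildeXn k : tilde ('X^k : {poly C}) = (-1) ^+ k *: 'X^k.
Proof. by rewrite /tilde comp_Xn_poly -scaleN1r exprZn. Qed.

Lemma tildeXnM k p : tilde ('X^k * p) = (-1) ^+ k *: ('X^k * tilde p).
Proof. by rewrite tildeM tildeXn scalerAl. Qed.

Lemma coef_tilde p k : (tilde p)`_k = (-1) ^+ k * p`_k.
Proof.
elim/poly_ind: p k => [|p c IHp] k; first by rewrite /tilde comp_poly0 !coef0 mulr0.
rewrite tildeD tildeM /tilde comp_polyX comp_polyC -/(tilde p).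
rewrite !coefD mulrN coefN !coefMX !coefC; case: k => [|k] /=.
  by rewrite oppr0 add0r mul1r.
by rewrite !addr0 IHp exprS mulN1r mulNr.
Qed.

Lemma size_tilde p : size (tilde p) = size p.
Proof. by rewrite size_comp_poly2 // size_polyN size_polyX. Qed.

Lemma tildeK : involutive (@tilde R).
Proof. by move=> p; apply/polyP => k; rewrite !coef_tilde mulrA signr_mul_same mul1r. Qed.

(* [dag n p] is the dagger of [p] seen as a polynomial of formal degree [n];
   unlike [dagger] it is additive. *)
Definition dag n p : {poly C} := \poly_(i < n.+1) (p`_(n - i))^*.

Lemma coef_dag n p i : (dag n p)`_i = if (i <= n)%N then (p`_(n - i))^* else 0.
Proof. by rewrite coef_poly ltnS. Qed.

Lemma size_dag n p : (size (dag n p) <= n.+1)%N.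
Proof. exact: size_poly. Qed.

Lemma size_dag_coef0 n p : p`_0 != 0 -> size (dag n p) = n.+1.
Proof.
move=> nz_p0; apply/anti_leq; rewrite size_dag lt_size_coef //.
by rewrite coef_dag leqnn subnn conjC_eq0.
Qed.

Lemma daggerE p : p != 0 -> dagger p = dag (size p).-1 p.
Proof.
move=> nz_p; rewrite /dagger /dag prednK ?size_poly_gt0 //.
by apply/polyP => i; rewrite !coef_poly subn1.
Qed.

Lemma coef0_dagger g : (dagger g)`_0 = (lead_coef g)^*.
Proof.
rewrite coef_poly lead_coefE subn0 subn1 size_poly_gt0.
by have [->|] := eqVneq g 0; rewrite ?coef0 ?rmorph0.
Qed.

Lemma dagK n p : (size p <= n.+1)%N -> dag n (dag n p) = p.
Proof.
move=> sp; apply/polyP => i; rewrite !coef_dag.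
case: ifP => [le_in | /negbT]; first by rewrite leq_subr subKn // conjCK.
by rewrite -ltnNge => lt_ni; rewrite (leq_sizeP _ _ sp).
Qed.

Lemma dagD n p q : dag n (p + q) = dag n p + dag n q.
Proof.
by apply/polyP => i; rewrite coefD !coef_dag coefD rmorphD; case: ifP; rewrite ?addr0.
Qed.

Lemma dagZ n c p : dag n (c *: p) = c^* *: dag n p.
Proof.
by apply/polyP => i; rewrite coefZ !coef_dag coefZ rmorphM; case: ifP; rewrite ?mulr0.
Qed.

Lemma dagN n p : dag n (- p) = - dag n p.
Proof. by rewrite -scaleN1r dagZ rmorphN1 scaleN1r. Qed.

Lemma dag_tilde n p : dag n (tilde p) = (-1) ^+ n *: tilde (dag n p).
Proof.
apply/polyP => i; rewrite coefZ coef_tilde !coef_dag coef_tilde.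
case: ifP => [le_in|_]; last by rewrite !mulr0.
rewrite rmorphM rmorphXn rmorphN1 mulrA; congr (_ * _).
by rewrite -{2}(subnK le_in) exprD -mulrA signr_mul_same mulr1.
Qed.

Lemma dag_mulXn n k p : (size p <= n.+1)%N -> dag (n + k) ('X^k * p) = dag n p.
Proof.
move=> sp; apply/polyP => i; rewrite !coef_dag coefXnM.
case: (leqP i n) => [le_in | lt_ni].
  have -> : (i <= n + k)%N by lia.
  have -> : (n + k - i < k)%N = false by lia.
  by have -> : (n + k - i - k = n - i)%N by lia.
case: ifP => // le_ink; case: ifP => [_ | /negbT]; first exact: rmorph0.
lia.
Qed.

Lemma dag_widen n k p : (size p <= n.+1)%N -> dag (n + k) p = 'X^k * dag n p.
Proof.
move=> sp; apply/polyP => i; rewrite coefXnM !coef_dag.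
case: (ltnP i k) => [lt_ik | le_ki].
  by case: ifP => // _; rewrite (leq_sizeP _ _ sp) ?rmorph0 //; lia.
have -> : (i <= n + k)%N = (i - k <= n)%N by lia.
by case: ifP => // _; congr (_^* ); congr (_`_ _); lia.
Qed.

Lemma horner_dag n p x : x != 0 -> (size p <= n.+1)%N ->
  (dag n p).[x] = x ^+ n * (p.[x^*^-1])^*.
Proof.
move=> nz_x sp; rewrite horner_poly (horner_coef_wide _ sp) rmorph_sum mulr_sumr.
rewrite (reindex_inj rev_ord_inj) /=; apply: eq_bigr => i _.
have le_in : (i <= n)%N by rewrite -ltnS.
rewrite subSS subKn // !rmorphM rmorphXn fmorphV /= conjCK exprVn mulrCA.
by rewrite exprB ?unitfE.
Qed.

Lemma dagM m n p q : (size p <= m.+1)%N -> (size q <= n.+1)%N ->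
  dag (m + n) (p * q) = dag m p * dag n q.
Proof.
move=> sp sq; apply: eq_poly_horner_nz => x nz_x.
rewrite hornerM !horner_dag ?size_mul_leqS // hornerM rmorphM exprD.
by rewrite mulrACA.
Qed.

Definition pdot p q : C := \sum_(i < maxn (size p) (size q)) p`_i * (q`_i)^*.

Lemma pdotEl n p q : (size p <= n)%N -> pdot p q = \sum_(i < n) p`_i * (q`_i)^*.
Proof.
move=> sp; rewrite /pdot; pose F i := p`_i * (q`_i)^*.
have vanish m : (size p <= m)%N -> forall i, (m <= i)%N -> F i = 0.
  by move=> spm i le_mi; rewrite /F nth_default ?mul0r // (leq_trans spm).
have [le_maxn | le_nmax] := leqP (maxn (size p) (size q)) n.
  by rewrite (sum_ord_widen (F := F) le_maxn) //; apply: vanish; rewrite leq_maxl.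
by rewrite (sum_ord_widen (F := F) (ltnW le_nmax)) //; apply: vanish.
Qed.

Lemma pdotC p q : pdot q p = (pdot p q)^*.
Proof.
by rewrite /pdot maxnC rmorph_sum; apply: eq_bigr => i _; rewrite rmorphM /= conjCK mulrC.
Qed.

Lemma pdotEr n p q : (size q <= n)%N -> pdot p q = \sum_(i < n) p`_i * (q`_i)^*.
Proof.
move=> sq; rewrite -[LHS]conjCK -pdotC (pdotEl _ sq) rmorph_sum.
by apply: eq_bigr => i _; rewrite rmorphM /= conjCK mulrC.
Qed.

Lemma pdotDl p q r : pdot (p + q) r = pdot p r + pdot q r.
Proof.
rewrite !(pdotEr (n := size r)) // -big_split; apply: eq_bigr => i _.
by rewrite coefD mulrDl.
Qed.

Lemma pdotZl c p q : pdot (c *: p) q = c * pdot p q.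
Proof.
rewrite !(pdotEr (n := size q)) // mulr_sumr; apply: eq_bigr => i _.
by rewrite coefZ mulrA.
Qed.

Lemma pdotNl p q : pdot (- p) q = - pdot p q.
Proof. by rewrite -scaleN1r pdotZl mulN1r. Qed.

Lemma pdotDr p q r : pdot p (q + r) = pdot p q + pdot p r.
Proof. by rewrite pdotC pdotDl rmorphD /= -!pdotC. Qed.

Lemma pdotZr c p q : pdot p (c *: q) = c^* * pdot p q.
Proof. by rewrite pdotC pdotZl rmorphM /= -pdotC. Qed.

Lemma pdotNr p q : pdot p (- q) = - pdot p q.
Proof. by rewrite pdotC pdotNl rmorphN /= -pdotC. Qed.

Lemma pdot_tilde p q : pdot (tilde p) (tilde q) = pdot p q.
Proof.
rewrite !(pdotEl (n := size p)) ?size_tilde //; apply: eq_bigr => i _.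
by rewrite !coef_tilde rmorphM rmorphXn rmorphN1 /= mulrACA signr_mul_same mul1r.
Qed.

Lemma pdot_mulXn k p q : pdot ('X^k * p) ('X^k * q) = pdot p q.
Proof.
rewrite (pdotEl (n := k + size p)) ?size_mulXn_leq // (pdotEl (n := size p)) //.
rewrite big_split_ord /= big1 ?add0r => [|i _]; last by rewrite coefXnM ltn_ord mul0r.
by apply: eq_bigr => i _; rewrite !coefXnM ltnNge leq_addr /= addKn.
Qed.

Lemma pdot_mulXn_eq0 k p q : (size p <= k)%N -> pdot p ('X^k * q) = 0.
Proof.
move=> sp; rewrite (pdotEl (n := k)) // big1 // => i _.
by rewrite coefXnM ltn_ord rmorph0 mulr0.
Qed.

Lemma pdot_coefM n p q : (size p <= n.+1)%N -> (size q <= n.+1)%N ->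
  pdot p q = (p * dag n q)`_n.
Proof.
move=> sp sq; rewrite coefM (pdotEl (n := n.+1)) //; apply: eq_bigr => i _.
have le_in : (i <= n)%N by rewrite -ltnS.
by rewrite coef_dag leq_subr subKn.
Qed.

Lemma pdot_dag n p q : (size p <= n.+1)%N -> (size q <= n.+1)%N ->
  pdot (dag n p) (dag n q) = pdot q p.
Proof.
move=> sp sq; rewrite (pdotEl (n := n.+1)) ?size_dag // (pdotEl (n := n.+1)) //.
rewrite (reindex_inj rev_ord_inj) /=; apply: eq_bigr => i _.
have le_in : (i <= n)%N by rewrite -ltnS.
by rewrite subSS !coef_dag leq_subr subKn // conjCK mulrC.
Qed.

Lemma pdot_even_odd p q : tilde p = p -> tilde q = - q -> pdot p q = 0.
Proof. by move=> ep oq; apply/eqP; rewrite -eqNr -pdotNr -oq -{1}ep pdot_tilde. Qed.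

Lemma pdotDD_even_odd p q : tilde p = p -> tilde q = - q ->
  pdot (p + q) (p + q) = pdot p p + pdot q q.
Proof.
move=> ep oq; rewrite !pdotDl !pdotDr (pdotC p q) (pdot_even_odd ep oq).
by rewrite rmorph0 addr0 add0r.
Qed.

Lemma pdotDB_even_odd p q : tilde p = p -> tilde q = - q ->
  pdot (p + q) (p - q) = pdot p p - pdot q q.
Proof.
move=> ep oq; rewrite !pdotDl !pdotDr !pdotNr (pdotC p q) (pdot_even_odd ep oq).
by rewrite rmorph0 oppr0 addr0 add0r.
Qed.

(* Up to the sign, both sides are the coefficient of ['X^(n + n)] in
   [p * dag n p * tilde p * tilde (dag n p)]. *)
Lemma pdot_mul_dag_tilde n p : (size p <= n.+1)%N ->
  (-1) ^+ n * pdot (p * dag n p) (tilde (p * dag n p)) =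
  pdot (p * tilde p) (p * tilde p).
Proof.
move=> sp; have sd := size_dag n p.
have st : (size (tilde p) <= n.+1)%N by rewrite size_tilde.
rewrite (pdot_coefM (n := n + n)) ?size_tilde ?size_mul_leqS //.
rewrite (pdot_coefM (n := n + n)) ?size_mul_leqS //.
rewrite dag_tilde !dagM // dagK // dag_tilde exprD signr_mul_same scale1r.
rewrite -!scalerAr coefZ tildeM; congr (_ * _).
suff -> : p * tilde p * (dag n p * tilde (dag n p)) =
          p * dag n p * (tilde (dag n p) * tilde p) by [].
by ring.
Qed.

Lemma pdot_mul_tilde_dag n p : (size p <= n.+1)%N ->
  pdot (dag n p * tilde (dag n p)) (dag n p * tilde (dag n p)) =
  pdot (p * tilde p) (p * tilde p).
Proof.
move=> sp; have st : (size (tilde p) <= n.+1)%N by rewrite size_tilde.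
have -> : dag n p * tilde (dag n p) = (-1) ^+ n *: dag (n + n) (p * tilde p).
  by rewrite dagM // dag_tilde -scalerAr scalerA signr_mul_same scale1r.
have sK : (size (p * tilde p)%R <= (n + n).+1)%N by apply: size_mul_leqS.
by rewrite pdotZl pdotZr rmorphXn rmorphN1 mulrA signr_mul_same mul1r pdot_dag.
Qed.

Definition pnorm2 p : R := \sum_(i < size p) sqnorm p`_i.

Lemma pnorm2E p : (pnorm2 p)%:C = pdot p p.
Proof.
rewrite /pdot maxnn /pnorm2 rmorph_sum; apply: eq_bigr => i _.
by rewrite /= sqnormE.
Qed.

Lemma pnorm2_gt0 p : p != 0 -> 0 < pnorm2 p.
Proof.
move=> nz_p; have sp : ((size p).-1 < size p)%N by rewrite prednK ?size_poly_gt0.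
rewrite /pnorm2 (bigD1 (Ordinal sp)) //= ltr_pwDl ?sqnorm_gt0 //.
  by rewrite -lead_coefE lead_coef_eq0.
by rewrite sumr_ge0 // => i _; apply: sqnorm_ge0.
Qed.

Lemma eq_pnorm2 p q : pdot p p = pdot q q -> pnorm2 p = pnorm2 q.
Proof. by rewrite -!pnorm2E => /complexI. Qed.

Lemma pnorm2N p : pnorm2 (- p) = pnorm2 p.
Proof. by apply: eq_pnorm2; rewrite pdotNl pdotNr opprK. Qed.

Lemma pnorm2_tilde p : pnorm2 (tilde p) = pnorm2 p.
Proof. by apply: eq_pnorm2; rewrite pdot_tilde. Qed.

Lemma pnorm2_sign n p : pnorm2 ((-1) ^+ n *: p) = pnorm2 p.
Proof.
by apply: eq_pnorm2; rewrite pdotZl pdotZr rmorphXn rmorphN1 mulrA signr_mul_same mul1r.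
Qed.

Definition acorr_energy g : R := pnorm2 (g * dagger g).
Definition tilde_energy g : R := pnorm2 (g * tilde g).

Lemma acorr_coef g d k : size g = d.+1 ->
  acorr g (k%:Z - d%:Z) = (g * dag d g)`_k.
Proof.
move=> size_g; rewrite mulrC coefM /acorr size_g.
pose G j := (dag d g)`_j * (if (j <= k)%N then g`_(k - j) else 0).
have G_k i : (k <= i)%N -> G i.+1 = 0 by move=> le_ki; rewrite /G leqNgt ltnS le_ki mulr0.
have G_d i : (d.+1 <= i)%N -> G i = 0.
  by move=> lt_di; rewrite /G coef_dag leqNgt lt_di mul0r.
transitivity (\sum_(j < d.+1) G j); last first.
  rewrite -(sum_ord_widen (F := G) (leq_maxl d.+1 k.+1)) //.
  rewrite (sum_ord_widen (F := G) (leq_maxr d.+1 k.+1)); last by case=> // i /G_k.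
  by apply: eq_bigr => i _; rewrite /G -ltnS ltn_ord.
rewrite (reindex_inj rev_ord_inj); apply: eq_bigr => j _ /=.
have le_jd : (j <= d)%N by rewrite -ltnS.
rewrite subSS /G coef_dag le_jd mulrC; congr (_ * _).
case: leqP => [le_jk | lt_kj].
  by have -> : (d - j)%N%:Z + (k%:Z - d%:Z) = (k - j)%N by lia.
by have -> : (d - j)%N%:Z + (k%:Z - d%:Z) = Negz (j - k.+1) by rewrite NegzE; lia.
Qed.

Lemma ADF_energy g : g != 0 -> ADF g = acorr_energy g / pnorm2 g ^+ 2 - 1.
Proof.
move=> nz_g; set d := (size g).-1.
have size_g : size g = d.+1 by rewrite prednK ?size_poly_gt0.
have sg : (size g <= d.+1)%N by rewrite size_g.
set H := g * dag d g.
have sH : (size H <= d.*2.+1)%N by rewrite -addnn size_mul_leqS ?size_dag.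
have lt_d : (d < d.*2.+1)%N by rewrite ltnS -addnn leq_addr.
have Hd : H`_d = (pnorm2 g)%:C by rewrite /H -(pdot_coefM sg sg) pnorm2E.
have -> : acorr_energy g =
    sqnorm H`_d + \sum_(k < d.*2.+1 | k != Ordinal lt_d) sqnorm H`_k.
  rewrite /acorr_energy daggerE // -/d -/H /pnorm2.
  rewrite -(sum_ord_widen (F := fun k => sqnorm H`_k) sH) => [|i le_Hi].
    by rewrite (bigD1 (Ordinal lt_d)).
  by rewrite nth_default ?sqnorm0.
rewrite /ADF size_g doubleS /=.
have -> : acorr g 0 = H`_d by rewrite -(acorr_coef _ size_g) subrr.
have -> : \sum_(k < d.*2.+1 | (k%:Z - d%:Z) != 0) sqnorm (acorr g (k%:Z - d%:Z)) =
          \sum_(k < d.*2.+1 | k != Ordinal lt_d) sqnorm H`_k.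
  by apply: eq_big => [k | k _]; rewrite ?subr_eq0 ?eqz_nat ?acorr_coef.
have nz_N : pnorm2 g != 0 by rewrite gt_eqF ?pnorm2_gt0.
by rewrite Hd sqnorm_real; field.
Qed.

Section Step.
Variables (f : {poly C}) (d : nat) (s : C).
Hypotheses (size_f : size f = d.+1) (s2 : s * s = 1) (s_real : s^* = s).

Local Notation e := ((-1) ^+ d : C).
Local Notation D := (dag d f).
Local Notation H := (f * D)%R.
Local Notation K := (f * tilde f)%R.
Local Notation f' := (f + s *: ('X^(d.+1) * tilde D))%R.
Local Notation U := (H + e *: tilde H)%R.
Local Notation V := (K + e *: ('X^(d.+1 + d.+1) * (D * tilde D)))%R.

Let sf : (size f <= d.+1)%N. Proof. by rewrite size_f. Qed.
Let daggerf : dagger f = D. Proof. by rewrite daggerE -?size_poly_eq0 size_f. Qed.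
Let e2 : e * e = 1. Proof. exact: signr_mul_same. Qed.
Let e_real : e^* = e. Proof. by rewrite rmorphXn rmorphN1. Qed.
Let sK : (size K <= d.+1 + d.+1)%N.
Proof.
by apply: leq_trans (size_mul_leqS (n := d) sf _) _; rewrite ?size_tilde //; lia.
Qed.

Lemma rs_stepE : rs_step s f = f'.
Proof. by rewrite /rs_step /len daggerf size_f. Qed.

Lemma size_step_leq : (size f' <= (d + d.+1).+1)%N.
Proof.
rewrite (leq_trans (size_polyD _ _)) // geq_max size_f ltnS leq_addr /=.
rewrite (leq_trans (size_scale_leq _ _)) // (leq_trans (size_mulXn_leq _ _)) //.
by have := size_dag d f; rewrite size_tilde; lia.
Qed.

Lemma dag_step : dag (d + d.+1) f' = 'X^(d.+1) * D + (s * e) *: tilde f.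
Proof.
rewrite dagD dag_widen // dagZ dag_mulXn ?size_tilde ?size_dag // dag_tilde dagK //.
by rewrite s_real scalerA.
Qed.

(* ['X^(d.+1) * U] is odd and [V] is even under [tilde], so the two summands
   are orthogonal. *)
Lemma mul_dag_step : f' * dag (d + d.+1) f' = 'X^(d.+1) * U + (s * e) *: V.
Proof.
have s2P : s%:P * s%:P = 1 :> {poly C} by rewrite -polyCM s2.
have e2P : e%:P * e%:P = 1 :> {poly C} by rewrite -polyCM e2.
rewrite dag_step tildeM exprD -!mul_polyC !polyCM.
by ring: e2P s2P.
Qed.

Lemma tilde_step_odd : tilde ('X^(d.+1) * U) = - ('X^(d.+1) * U).
Proof.
have tildeU : tilde U = e *: U.
  by rewrite tildeD tildeZ tildeK scalerDr scalerA e2 scale1r addrC.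
rewrite tildeXnM tildeU scalerAr scalerA [(-1) ^+ d.+1]exprS mulN1r mulNr e2.
by rewrite scaleN1r mulrN.
Qed.

Lemma tilde_step_even : tilde V = V.
Proof.
rewrite tildeD tildeM tildeK tildeZ tildeXnM tildeM tildeK exprD signr_mul_same scale1r.
by rewrite [tilde D * D]mulrC [tilde f * f]mulrC.
Qed.

Lemma pdot_step_odd : pdot U U = 2 * pdot H H + 2 * pdot K K.
Proof.
have tHH : pdot (tilde H) H = pdot H (tilde H) by rewrite -{2}[H]tildeK pdot_tilde.
rewrite !pdotDl !pdotDr !pdotZl !pdotZr pdot_tilde tHH e_real.
rewrite -(pdot_mul_dag_tilde sf).
by ring: e2.
Qed.

Lemma pdot_step_even : pdot V V = 2 * pdot K K.
Proof.
rewrite !pdotDl !pdotDr !pdotZl !pdotZr (pdotC K ('X^_ * _)) (pdot_mulXn_eq0 _ sK).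
by rewrite pdot_mulXn (pdot_mul_tilde_dag sf) rmorph0 e_real; ring: e2.
Qed.

Lemma pdot_rs_step : pdot f' f' = 2 * pdot f f.
Proof.
rewrite !pdotDl !pdotDr !pdotZl !pdotZr (pdotC f ('X^_ * _)) (pdot_mulXn_eq0 _ sf).
by rewrite pdot_mulXn pdot_tilde pdot_dag // rmorph0 s_real; ring: s2.
Qed.

Lemma pdot_mul_dag_rs_step :
  pdot (f' * dag (d + d.+1) f') (f' * dag (d + d.+1) f') =
  2 * pdot H H + 4 * pdot K K.
Proof.
rewrite mul_dag_step addrC pdotDD_even_odd ?tildeZ ?tilde_step_even ?tilde_step_odd //.
rewrite pdotZl pdotZr pdot_mulXn pdot_step_odd pdot_step_even rmorphM /= s_real e_real.
by ring: s2 e2.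
Qed.

(* [pdot_mul_dag_tilde] for [f'] reduces its tilde energy to the odd/even
   splitting of [mul_dag_step]. *)
Lemma pdot_mul_tilde_rs_step : pdot (f' * tilde f') (f' * tilde f') = 2 * pdot H H.
Proof.
rewrite -(pdot_mul_dag_tilde size_step_leq) mul_dag_step tildeD tildeZ.
rewrite tilde_step_even tilde_step_odd addrC [- _ + _]addrC.
rewrite pdotDB_even_odd ?tildeZ ?tilde_step_even ?tilde_step_odd //.
rewrite pdotZl pdotZr pdot_mulXn pdot_step_odd pdot_step_even rmorphM /= s_real e_real.
by rewrite exprD [(-1) ^+ d.+1]exprS; ring: s2 e2.
Qed.

Lemma coef0_rs_step : (rs_step s f)`_0 = f`_0.
Proof. by rewrite rs_stepE coefD coefZ coefXnM /= mulr0 addr0. Qed.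

Lemma size_rs_step : f`_0 != 0 -> size (rs_step s f) = (d + d.+1).+1.
Proof.
move=> nz_f0; apply/anti_leq; rewrite rs_stepE size_step_leq /=.
apply: lt_size_coef; rewrite coefD coefZ coefXnM ltnNge leq_addl /= addnK.
rewrite nth_default ?size_f ?leq_addl // add0r coef_tilde coef_dag leqnn subnn.
have nz_s : s != 0 by apply: contra_eq_neq s2 => ->; rewrite mul0r eq_sym oner_neq0.
by rewrite !mulf_neq0 ?signr_eq0 ?conjC_eq0.
Qed.

Lemma pnorm2_rs_step : pnorm2 (rs_step s f) = 2 * pnorm2 f.
Proof.
by apply: complexI; rewrite rmorphM rmorph_nat /= !pnorm2E rs_stepE pdot_rs_step.
Qed.

Lemma acorr_energy_rs_step : f`_0 != 0 ->
  acorr_energy (rs_step s f) = 2 * acorr_energy f + 4 * tilde_energy f.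
Proof.
move=> nz_f0; apply: complexI.
rewrite /acorr_energy /tilde_energy daggerE -?size_poly_eq0 size_rs_step //=.
by rewrite rmorphD !rmorphM !rmorph_nat /= !pnorm2E daggerf rs_stepE pdot_mul_dag_rs_step.
Qed.

Lemma tilde_energy_rs_step : tilde_energy (rs_step s f) = 2 * acorr_energy f.
Proof.
apply: complexI; rewrite /acorr_energy /tilde_energy rmorphM rmorph_nat /= !pnorm2E.
by rewrite daggerf rs_stepE pdot_mul_tilde_rs_step.
Qed.

End Step.

Definition rs_invariant g : R := (acorr_energy g + tilde_energy g) / pnorm2 g ^+ 2.

Lemma rs_invariantN g : g != 0 -> rs_invariant (- g) = rs_invariant g.
Proof.
move=> nz_g; rewrite /rs_invariant /acorr_energy /tilde_energy !daggerE ?oppr_eq0 //.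
by rewrite size_polyN dagN tildeN !mulrNN pnorm2N.
Qed.

Lemma rs_invariant_tilde g : g != 0 -> rs_invariant (tilde g) = rs_invariant g.
Proof.
move=> nz_g; have nz_tg : tilde g != 0 by rewrite -size_poly_eq0 size_tilde size_poly_eq0.
rewrite /rs_invariant /acorr_energy /tilde_energy !daggerE // size_tilde dag_tilde.
by rewrite tildeK -scalerAr -(tildeM g) pnorm2_sign !pnorm2_tilde [tilde g * g]mulrC.
Qed.

Lemma rs_invariant_dagger g : g`_0 != 0 -> rs_invariant (dagger g) = rs_invariant g.
Proof.
move=> nz_g0; have nz_g : g != 0 by rewrite -size_poly_gt0 (lt_size_coef nz_g0).
set d := (size g).-1; have size_g : size g = d.+1 by rewrite prednK ?size_poly_gt0.
have sg : (size g <= d.+1)%N by rewrite size_g.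
have dagger_g : dagger g = dag d g by rewrite daggerE.
have daggerK : dagger (dag d g) = g.
  by rewrite daggerE -?size_poly_eq0 size_dag_coef0 //= dagK.
rewrite /rs_invariant /acorr_energy /tilde_energy dagger_g daggerK [dag d g * g]mulrC.
congr ((_ + _) / _ ^+ 2); apply: eq_pnorm2; [exact: pdot_mul_tilde_dag | exact: pdot_dag].
Qed.

Lemma in_G_rs_invariant t g : in_G t -> g`_0 != 0 ->
  (t g)`_0 != 0 /\ rs_invariant (t g) = rs_invariant g.
Proof.
move=> Gt nz_g0; elim: Gt => [|{}t _ [nz_tg0 <-]|{}t _ [nz_tg0 <-]|{}t _ [nz_tg0 <-]] //=.
all: have nz_tg : t g != 0 by rewrite -size_poly_gt0 (lt_size_coef nz_tg0).
- by rewrite /gen_n coefN oppr_eq0 rs_invariantN.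
- by rewrite /gen_h coef_tilde mul1r rs_invariant_tilde.
- by rewrite /gen_r coef0_dagger conjC_eq0 lead_coef_eq0 rs_invariant_dagger.
Qed.

End RudinShapiro.

Local Open Scope classical_set_scope.

Lemma rs_recursion_cvg (R : realType) (u v : nat -> R) :
  (forall m, u m.+1 = u m / 2 + v m) -> (forall m, v m.+1 = u m / 2) ->
  u m @[m --> \oo] --> 2 / 3 * (u 0%N + v 0%N).
Proof.
move=> u_step v_step.
have sum_const m : u m + v m = u 0%N + v 0%N.
  by elim: m => // m <-; rewrite u_step v_step; field.
have diff_geom m : u m - 2 * v m = (- 2^-1) ^+ m * (u 0%N - 2 * v 0%N).
  elim: m => [|m IHm]; first by rewrite expr0 mul1r.
  by rewrite exprS -mulrA -IHm u_step v_step; field.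
have u_closed m :
    u m = 2 / 3 * (u 0%N + v 0%N) + (u 0%N - 2 * v 0%N) / 3 * (- 2^-1) ^+ m.
  by rewrite -(sum_const m) [_ * _ ^+ m]mulrC mulrA -diff_geom; field.
have ratio_lt1 : `|- 2^-1 : R| < 1 by rewrite normrN ger0_norm ?invr_ge0 ?ler0n //; lra.
set a := u 0%N in u_closed *; set b := v 0%N in u_closed *.
rewrite (funext u_closed) -[X in _ --> X]addr0 -(mulr0 ((a - 2 * b) / 3)).
exact: cvgD (cvg_cst _) (cvgM (cvg_cst _) (cvg_expr ratio_lt1)).
Qed.

Lemma RS_like_ADF_cvg (R : realType) (f : nat -> {poly R[i]}) :
  RS_like f -> (f 0%N)`_0 != 0 ->
  ADF (f m) @[m --> \oo] --> 2 / 3 * rs_invariant (f 0%N) - 1.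
Proof.
case=> sigma [sign_sigma f_step] nz_f00.
have sigma2 m : sigma m * sigma m = 1.
  by case: (sign_sigma m) => ->; rewrite ?mulrNN mulr1.
have sigma_real m : (sigma m)^* = sigma m.
  by case: (sign_sigma m) => ->; rewrite ?rmorphN1 ?rmorph1.
have sizeS (g : {poly R[i]}) : g`_0 != 0 -> size g = (size g).-1.+1.
  by move=> nz_g0; rewrite prednK // (lt_size_coef nz_g0).
have nz_f0 m : (f m)`_0 != 0.
  by elim: m => // m IHm; rewrite f_step (coef0_rs_step _ (sizeS _ IHm)).
have nz_N m : pnorm2 (f m) != 0.
  by rewrite gt_eqF // pnorm2_gt0 // -size_poly_gt0 lt_size_coef.
pose u m := acorr_energy (f m) / pnorm2 (f m) ^+ 2.
pose v m := tilde_energy (f m) / pnorm2 (f m) ^+ 2.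
have [u_step v_step] : (forall m, u m.+1 = u m / 2 + v m) /\ (forall m, v m.+1 = u m / 2).
  split=> m; have size_fm := sizeS _ (nz_f0 m); move: (nz_N m); rewrite /u /v f_step.
    rewrite (pnorm2_rs_step size_fm) // (acorr_energy_rs_step size_fm) //.
    by move=> ?; field.
  rewrite (pnorm2_rs_step size_fm) // (tilde_energy_rs_step size_fm) //.
  by move=> ?; field.
have ADF_u m : ADF (f m) = u m - 1.
  by rewrite ADF_energy // -size_poly_gt0 (lt_size_coef (nz_f0 m)).
have -> : rs_invariant (f 0%N) = u 0%N + v 0%N by rewrite /rs_invariant mulrDl.
rewrite (funext ADF_u).
apply: cvgB; [exact: rs_recursion_cvg | exact: cvg_cst].
Qed.

Theorem corollary3p3 (R : realType) (ell : nat)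
    (t : {poly R[i]} -> {poly R[i]}) (f a : nat -> {poly R[i]}) :
  in_P ell (f 0%N) ->
  in_G t ->
  a 0%N = t (f 0%N) ->
  RS_like f -> RS_like a ->
  exists L : R,
    ADF (a m) @[m --> \oo] --> L /\ ADF (f m) @[m --> \oo] --> L.
Proof.
move=> [_ nz_f00] Gt a0 RS_f RS_a.
have [nz_a00 a_inv] : (a 0%N)`_0 != 0 /\ rs_invariant (a 0%N) = rs_invariant (f 0%N).
  by rewrite a0; apply: in_G_rs_invariant.
exists (2 / 3 * rs_invariant (f 0%N) - 1); split; last exact: RS_like_ADF_cvg.
by rewrite -a_inv; apply: RS_like_ADF_cvg.
Qed.
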